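(* Let $(A,\mu,E,\Delta,\epsilon)$ be a weak multiplier bialgebra over a field. For all $a,b\in A$, $\overline\sqcap^R(a)\,\overline\sqcap^L(b)=\overline\sqcap^L(b)\,\overline\sqcap^R(a)$ in $\mathbb M(A)$.
   Context: Let $k$ be a field. A non-unital $k$-algebra $A$ is idempotent if its multiplication $\mu$ is surjective and has non-degenerate multiplication if ($ab=0\ \forall a$)$\Rightarrow b=0$ and ($ba=0\ \forall a$)$\Rightarrow b=0$. $\mathbb M(A)$ is its multiplier algebra (pairs $(\lambda,\rho)$ of linear maps $A\to A$ with $a\lambda(b)=\rho(a)b$), a unital algebra containing $A$ as a dense ideal; $A\otimes A\subseteq\mathbb M(A\otimes A)$. Multiplicative $\gamma:A\to\mathbb M(B)$ with idempotent $e\in\mathbb M(B)$, $\langle\gamma(a)b\rangle=eB$, $\langle b\gamma(a)\rangle=Be$ ($\langle\,\rangle$=span) extends uniquely to multiplicative $\overline\gamma:\mathbb M(A)\to\mathbb M(B)$ with $\overline\gamma(1)=e$. A weak multiplier bialgebra: idempotent $A$ with non-degenerate multiplication, idempotent $E\in\mathbb M(A\otimes A)$, multiplicative linear $\Delta:A\to\mathbb M(A\otimes A)$, linear $\epsilon:A\to k$ with: (i) $T_1(a\otimes b):=\Delta(a)(1\otimes b)$, $T_2(a\otimes b):=(a\otimes1)\Delta(b)$ lie in $A\otimes A$; (ii) $(T_2\otimes\mathrm{id})(\mathrm{id}\otimes T_1)=(\mathrm{id}\otimes T_1)(T_2\otimes\mathrm{id})$; (iii) $(\epsilon\otimes\mathrm{id})T_1=\mu=(\mathrm{id}\otimes\epsilon)T_2$;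 (iv) $\langle\Delta(a)(b\otimes b')\rangle=\langle E(b\otimes b')\rangle$, $\langle(b\otimes b')\Delta(a)\rangle=\langle(b\otimes b')E\rangle$; (v) $(E\otimes1)(1\otimes E)=E^{(3)}=(1\otimes E)(E\otimes1)$ with $E^{(3)}:=(\overline{\mathrm{id}\otimes\Delta})(E)=(\overline{\Delta\otimes\mathrm{id}})(E)$; (vi) $(\epsilon\otimes\mathrm{id})((1\otimes a)E(b\otimes c))=(\epsilon\otimes\mathrm{id})(\Delta(a)(b\otimes c))$ and $(\epsilon\otimes\mathrm{id})((a\otimes b)E(1\otimes c))=(\epsilon\otimes\mathrm{id})((a\otimes b)\Delta(c))$. $\overline\sqcap^L(a)\in\mathbb M(A)$ is the multiplier with $\overline\sqcap^L(a)b=(\epsilon\otimes\mathrm{id})((a\otimes1)\Delta(b))$, $b\overline\sqcap^L(a)=(\epsilon\otimes\mathrm{id})((a\otimes b)E)$; $\overline\sqcap^R(a)\in\mathbb M(A)$ is the multiplier with $b\overline\sqcap^R(a)=(\mathrm{id}\otimes\epsilon)(\Delta(b)(1\otimes a))$, $\overline\sqcap^R(a)b=(\mathrm{id}\otimes\epsilon)(E(b\otimes a))$. *)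

From HB Require Import structures.
From mathcomp Require Import all_boot all_algebra.
Set Implicit Arguments. Unset Strict Implicit. Unset Printing Implicit Defensive.
Import GRing.Theory.
Local Open Scope ring_scope.

Section Tensors.
Variables (k : fieldType) (A : lmodType k).

Definition lfun (f : A -> k) : Prop :=
  forall (c : k) (x y : A), f (c *: x + y) = c * f x + f y.

(** Elements of A⊗A (resp. A⊗A⊗A) are represented by finite sums of simple
    tensors  sum_i x_i ⊗ y_i ; two representations denote the same tensor iff
    they agree against all products of linear functionals (over a field,
    A⊗A embeds into bilinear forms on (dual A) × (dual A)). *)
Definition t2 := seq (A * A).
Definition t3 := seq (A * A * A).

Definition eq2 (s t : t2) : Prop :=
  forall f g, lfun f -> lfun g ->
    \sum_(p <- s) f p.1 * g p.2 = \sum_(p <- t) f p.1 * g p.2.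

Definition eq3 (s t : t3) : Prop :=
  forall f g h, lfun f -> lfun g -> lfun h ->
    \sum_(p <- s) f p.1.1 * g p.1.2 * h p.2 =
    \sum_(p <- t) f p.1.1 * g p.1.2 * h p.2.

Definition scale2 (c : k) (s : t2) : t2 := [seq (c *: p.1, p.2) | p <- s].

Definition ext2 (L : A * A -> t2) (s : t2) : t2 := flatten (map L s).
Definition ext3 (L : A * A * A -> t3) (s : t3) : t3 := flatten (map L s).

Definition bilin2 (L : A * A -> t2) : Prop :=
  (forall c x x' y, eq2 (L (c *: x + x', y)) (scale2 c (L (x, y)) ++ L (x', y))) /\
  (forall c x y y', eq2 (L (x, c *: y + y')) (scale2 c (L (x, y)) ++ L (x, y'))).

Definition span2 (S : t2 -> Prop) (z : t2) : Prop :=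
  exists l : seq (k * t2), (forall q, q \in l -> S q.2) /\
    eq2 z (flatten [seq scale2 q.1 q.2 | q <- l]).

(** multipliers of A⊗A: pairs (λ, ρ) of linear maps A⊗A -> A⊗A, given on
    simple tensors:  λ(x⊗y) = M (x⊗y),  ρ(x⊗y) = (x⊗y) M. *)
Definition M2 := ((A * A -> t2) * (A * A -> t2))%type.
Definition M3 := ((A * A * A -> t3) * (A * A * A -> t3))%type.

Definition eqM2 (M N : M2) : Prop :=
  forall t, eq2 (M.1 t) (N.1 t) /\ eq2 (M.2 t) (N.2 t).
Definition eqM3 (M N : M3) : Prop :=
  forall t, eq3 (M.1 t) (N.1 t) /\ eq3 (M.2 t) (N.2 t).

(** product of multipliers:  (MN)x = M(Nx),  x(MN) = (xM)N *)
Definition mulM2 (M N : M2) : M2 :=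
  (fun t => ext2 M.1 (N.1 t), fun t => ext2 N.2 (M.2 t)).
Definition mulM3 (M N : M3) : M3 :=
  (fun t => ext3 M.1 (N.1 t), fun t => ext3 N.2 (M.2 t)).
Definition addM2 (M N : M2) : M2 :=
  (fun t => M.1 t ++ N.1 t, fun t => M.2 t ++ N.2 t).
Definition scaleM2 (c : k) (M : M2) : M2 :=
  (fun t => scale2 c (M.1 t), fun t => scale2 c (M.2 t)).

Variable (m : A -> A -> A).

Definition mul2 (s t : t2) : t2 := [seq (m p.1 q.1, m p.2 q.2) | p <- s, q <- t].

Definition is_mult2 (M : M2) : Prop :=
  bilin2 M.1 /\ bilin2 M.2 /\
  forall x y : t2, eq2 (mul2 x (ext2 M.1 y)) (mul2 (ext2 M.2 x) y).

Definition elt2 (z : t2) : M2 := (fun t => mul2 z [:: t], fun t => mul2 [:: t] z).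
Definition one_ox (b : A) : M2 :=
  (fun t => [:: (t.1, m b t.2)], fun t => [:: (t.1, m t.2 b)]).
Definition ox_one (a : A) : M2 :=
  (fun t => [:: (m a t.1, t.2)], fun t => [:: (m t.1 a, t.2)]).

Definition Eox1 (E : M2) : M3 :=
  (fun t => [seq (p.1, p.2, t.2) | p <- E.1 t.1],
   fun t => [seq (p.1, p.2, t.2) | p <- E.2 t.1]).
Definition oneoxE (E : M2) : M3 :=
  (fun t => [seq (t.1.1, p.1, p.2) | p <- E.1 (t.1.2, t.2)],
   fun t => [seq (t.1.1, p.1, p.2) | p <- E.2 (t.1.2, t.2)]).

Definition idoxD (D : A -> M2) (w : t2) : M3 :=
  (fun t => flatten [seq [seq (m q.1 t.1.1, p.1, p.2) | p <- (D q.2).1 (t.1.2, t.2)]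
                    | q <- w],
   fun t => flatten [seq [seq (m t.1.1 q.1, p.1, p.2) | p <- (D q.2).2 (t.1.2, t.2)]
                    | q <- w]).
Definition DoxId (D : A -> M2) (w : t2) : M3 :=
  (fun t => flatten [seq [seq (p.1, p.2, m q.2 t.2) | p <- (D q.1).1 t.1] | q <- w],
   fun t => flatten [seq [seq (p.1, p.2, m t.2 q.2) | p <- (D q.1).2 t.1] | q <- w]).

(** [is_ext_value g e mm F]:  F = gbar(mm), where gbar : M(A⊗A) -> M(A⊗A⊗A) is
    the unique multiplicative extension of g with gbar(1) = e.  It is
    characterised by  F e = F = e F,  F g(w) = g(mm w),  g(w) F = g(w mm). *)
Definition is_ext_value (g : t2 -> M3) (e : M3) (mm : M2) (F : M3) : Prop :=
  eqM3 (mulM3 F e) F /\ eqM3 (mulM3 e F) F /\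
  (forall w, eqM3 (mulM3 F (g w)) (g (ext2 mm.1 w))) /\
  (forall w, eqM3 (mulM3 (g w) F) (g (ext2 mm.2 w))).

Definition idoxT (T : A -> A -> t2) (t : A * A * A) : t3 :=
  [seq (t.1.1, p.1, p.2) | p <- T t.1.2 t.2].
Definition Toxid (T : A -> A -> t2) (t : A * A * A) : t3 :=
  [seq (p.1, p.2, t.2) | p <- T t.1.1 t.1.2].

Variable (eps : A -> k).
Definition epsid (s : t2) : A := \sum_(p <- s) eps p.1 *: p.2.
Definition ideps (s : t2) : A := \sum_(p <- s) eps p.2 *: p.1.

End Tensors.

Record WMBA (k : fieldType) (A : lmodType k) := {
  mul : A -> A -> A;
  mulA : forall x y z, mul x (mul y z) = mul (mul x y) z;
  mul_linl : forall (c : k) x x' y, mul (c *: x + x') y = c *: mul x y + mul x' y;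
  mul_linr : forall (c : k) x y y', mul x (c *: y + y') = c *: mul x y + mul x y';
  idempotent : forall a, exists s : t2 A, a = \sum_(p <- s) mul p.1 p.2;
  nondeg_l : forall b, (forall a, mul a b = 0) -> b = 0;
  nondeg_r : forall b, (forall a, mul b a = 0) -> b = 0;
  E : M2 A;
  Delta : A -> M2 A;
  eps : A -> k;
  T1 : A -> A -> t2 A;
  T2 : A -> A -> t2 A;
  E_mult : is_mult2 mul E;
  E_idem : eqM2 (mulM2 E E) E;
  Delta_mult : forall a, is_mult2 mul (Delta a);
  Delta_lin : forall (c : k) a a',
      eqM2 (Delta (c *: a + a')) (addM2 (scaleM2 c (Delta a)) (Delta a'));
  Delta_mul : forall a b, eqM2 (Delta (mul a b)) (mulM2 (Delta a) (Delta b));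
  eps_lin : lfun eps;
  ax_i1 : forall a b, eqM2 (mulM2 (Delta a) (one_ox mul b)) (elt2 mul (T1 a b));
  ax_i2 : forall a b, eqM2 (mulM2 (ox_one mul a) (Delta b)) (elt2 mul (T2 a b));
  ax_ii : forall t, eq3 (ext3 (Toxid T2) (idoxT T1 t)) (ext3 (idoxT T1) (Toxid T2 t));
  ax_iii1 : forall a b, epsid eps (T1 a b) = mul a b;
  ax_iii2 : forall a b, ideps eps (T2 a b) = mul a b;
  ax_iv1 : forall z, span2 (fun w => exists a t, w = (Delta a).1 t) z <->
                     span2 (fun w => exists t, w = E.1 t) z;
  ax_iv2 : forall z, span2 (fun w => exists a t, w = (Delta a).2 t) z <->
                     span2 (fun w => exists t, w = E.2 t) z;
  ax_v_comm : eqM3 (mulM3 (Eox1 E) (oneoxE E)) (mulM3 (oneoxE E) (Eox1 E));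
  ax_v_idD : is_ext_value (idoxD mul Delta) (oneoxE E) E (mulM3 (Eox1 E) (oneoxE E));
  ax_v_Did : is_ext_value (DoxId mul Delta) (Eox1 E) E (mulM3 (Eox1 E) (oneoxE E));
  ax_vi1 : forall a b c,
      epsid eps [seq (p.1, mul a p.2) | p <- E.1 (b, c)] = epsid eps ((Delta a).1 (b, c));
  ax_vi2 : forall a b c,
      epsid eps [seq (p.1, mul p.2 c) | p <- E.2 (a, b)] = epsid eps ((Delta c).2 (a, b))
}.

Section Pi.
Variables (k : fieldType) (A : lmodType k) (W : WMBA A).

(** multipliers of A as pairs (λ, ρ):  λ b = M b,  ρ b = b M *)
Definition M1 := ((A -> A) * (A -> A))%type.
Definition mulM1 (M N : M1) : M1 := (fun b => M.1 (N.1 b), fun b => N.2 (M.2 b)).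

(** ⊓^L(a) b = (ε⊗id)((a⊗1)Δ(b)),  b ⊓^L(a) = (ε⊗id)((a⊗b)E) *)
Definition PiL (a : A) : M1 :=
  (fun b => epsid (eps W) (T2 W a b), fun b => epsid (eps W) ((E W).2 (a, b))).
(** ⊓^R(a) b = (id⊗ε)(E(b⊗a)),  b ⊓^R(a) = (id⊗ε)(Δ(b)(1⊗a)) *)
Definition PiR (a : A) : M1 :=
  (fun b => ideps (eps W) ((E W).1 (b, a)), fun b => ideps (eps W) (T1 W b a)).
End Pi.

From Pilot Require Import Defs.
From mathcomp Require Import all_boot all_algebra.
From mathcomp Require Import boolp classical_sets.
Set Implicit Arguments. Unset Strict Implicit. Unset Printing Implicit Defensive.
Import GRing.Theory.
Local Open Scope ring_scope.

(* Tested against a linear functional g, both sides become contractions by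
   ε ⊗ g ⊗ ε of three-fold tensors: for the first components
     (1 ⊗ E)((b ⊗ 1)Δ(x) ⊗ a)   and   (b ⊗ 1 ⊗ 1)(Δ ⊗ id)(E(x ⊗ a)),
   and mirror images for the second ones.  These agree because E Δ(x) = Δ(x)
   (E is idempotent and the Δ(x) span the same space as E), so that
   (1 ⊗ E)(Δ(x) ⊗ a) = (1 ⊗ E)(E ⊗ 1)(Δ(x) ⊗ a) = E^(3)(Δ ⊗ id)(x ⊗ a)
   = (Δ ⊗ id)(E(x ⊗ a)).  Tensors are compared through their values on
   products of functionals, which Zorn's lemma makes plentiful enough to
   separate points; non-degeneracy of the multiplication transports
   identities between multipliers to such values. *)

Section LinearFunctionals.
Variables (k : fieldType) (A : lmodType k).
Implicit Types (f g : A -> k) (x y u v : A).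

Lemma lfun0 f : lfun f -> f 0 = 0.
Proof.
move=> lf; have := lf 1 0 0; rewrite scale1r addr0 mul1r => h.
by apply: (@addrI _ (f 0)); rewrite addr0 -h.
Qed.

Lemma lfunD f x y : lfun f -> f (x + y) = f x + f y.
Proof. by move=> lf; rewrite -[x in LHS]scale1r lf mul1r. Qed.

Lemma lfunZ f c x : lfun f -> f (c *: x) = c * f x.
Proof. by move=> lf; rewrite -[c *: x]addr0 lf lfun0 // addr0. Qed.

Lemma lfunN f x : lfun f -> f (- x) = - f x.
Proof. by move=> lf; rewrite -scaleN1r lfunZ // mulN1r. Qed.

Lemma lfunB f x y : lfun f -> f (x - y) = f x - f y.
Proof. by move=> lf; rewrite lfunD // lfunN. Qed.

Lemma lfun_sum f (T : Type) (s : seq T) (F : T -> A) (c : T -> k) :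
  lfun f -> f (\sum_(p <- s) c p *: F p) = \sum_(p <- s) c p * f (F p).
Proof.
move=> lf; elim: s => [|p s IH]; first by rewrite !big_nil lfun0.
by rewrite !big_cons lfunD // lfunZ // IH.
Qed.

Section Separation.
Local Open Scope classical_set_scope.
Variable u : A.
Hypothesis u_neq0 : u != 0.

Definition subspace_avoiding (S : set A) :=
  (forall (c : k) x y, S x -> S y -> S (c *: x + y)) /\ ~ S u.

Lemma exists_maximal_subspace_avoiding : exists M, subspace_avoiding M /\
  forall S, M `<` S -> ~ subspace_avoiding S.
Proof.
apply: Zorn_bigcup => F FS Ftot; split; last by case=> X FX; apply: (FS X FX).2.
move=> c x y [X FX Xx] [Y FY Yy].
have [XY|YX] := Ftot X Y FX FY.
- by exists Y => //; apply: (FS Y FY).1 => //; apply: XY.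
- by exists X => //; apply: (FS X FX).1 => //; apply: YX.
Qed.

Variable M : set A.
Hypothesis M_closed : forall (c : k) x y, M x -> M y -> M (c *: x + y).
Hypothesis M_avoids : ~ M u.
Hypothesis M_maximal : forall S, M `<` S -> ~ subspace_avoiding S.

Lemma maximal_subspace0 : M 0.
Proof.
have [[x Mx]|M_empty] := pselect (exists x, M x).
  by have := M_closed (-1) Mx Mx; rewrite scaleN1r addNr.
exfalso; apply: (M_maximal (S := [set 0])).
  split=> [x Mx|/(_ 0 erefl) M0]; exfalso; apply: M_empty; first by exists x.
  by exists 0.
split=> [c x y -> ->|/= u0]; first by rewrite scaler0 addr0.
by move: u_neq0; rewrite u0 eqxx.
Qed.

Lemma maximal_subspace_cover x : exists c, M (x - c *: u).
Proof.
apply/not_existsP => x_out.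
pose S y := exists m (c : k), M m /\ y = m + c *: x.
apply: (M_maximal (S := S)).
  split=> [m Mm|Sx]; first by exists m, 0; rewrite scale0r addr0.
  apply: (x_out 0); rewrite scale0r subr0; apply: Sx.
  by exists 0, 1; split; [exact: maximal_subspace0 | rewrite add0r scale1r].
split=> [a _ _ [m [c [Mm ->]]] [m' [c' [Mm' ->]]]|[m [c [Mm ue]]]].
  exists (a *: m + m'), (a * c + c'); split; first exact: M_closed.
  by rewrite scalerDr scalerDl scalerA addrACA.
have [c0|cn0] := eqVneq c 0.
  by apply: M_avoids; rewrite ue c0 scale0r addr0.
apply: (x_out c^-1); rewrite ue scalerDr scalerA mulVf // scale1r opprD addrA.
rewrite addrAC subrr add0r -[X in M X]addr0 -scaleNr.
exact: M_closed Mm maximal_subspace0.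
Qed.

Lemma maximal_subspace_coef_unique x c d : M (x - c *: u) -> M (x - d *: u) -> c = d.
Proof.
move=> Mc Md; apply/eqP; apply/negPn/negP => cd.
have := M_closed (-1) Md Mc.
rewrite scaleN1r opprB addrA subrK -scalerBl => Mdc.
have dc : d - c != 0 by rewrite subr_eq0 eq_sym.
apply: M_avoids; rewrite -[u]scale1r -(mulVf dc) -scalerA -[X in M X]addr0.
exact: M_closed Mdc maximal_subspace0.
Qed.

End Separation.

(* A maximal subspace avoiding u is a hyperplane complementing the line
   through u; the coefficient of u along it is the functional. *)
Lemma exists_lfun_eq1 u : u != 0 -> exists f, lfun f /\ f u = 1.
Proof.
move=> u_neq0.
have [M [[M_closed M_avoids] M_maximal]] := exists_maximal_subspace_avoiding u.
have cover := maximal_subspace_cover u_neq0 M_closed M_avoids M_maximal.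
have uniq := maximal_subspace_coef_unique u_neq0 M_closed M_avoids M_maximal.
have M0 := maximal_subspace0 u_neq0 M_closed M_maximal.
pose f x := projT1 (cid (cover x)).
have Mf x : M (x - f x *: u) by rewrite /f; case: cid.
exists f; split; last first.
  by apply: uniq (Mf u) _; rewrite scale1r subrr.
move=> c x y; apply: uniq (Mf _) _.
have := M_closed c _ _ (Mf x) (Mf y).
by rewrite scalerBr addrACA -opprD scalerA -scalerDl.
Qed.

Lemma lfun_separates u : (forall f, lfun f -> f u = 0) -> u = 0.
Proof.
move=> fu0; apply/eqP; apply/negPn/negP => /exists_lfun_eq1 [f [lf fu]].
by move: (fu0 f lf); rewrite fu => /eqP; rewrite oner_eq0.
Qed.

Lemma eq_of_lfun u v : (forall f, lfun f -> f u = f v) -> u = v.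
Proof.
move=> fuv; apply/eqP; rewrite -subr_eq0; apply/eqP/lfun_separates => f lf.
by rewrite lfunB // fuv // subrr.
Qed.

Lemma normalizing_lfun u : exists f, lfun f /\ f u *: u = u.
Proof.
have [->|/exists_lfun_eq1 [f [lf fu]]] := eqVneq u 0.
  by exists (fun=> 0); split=> [c x y|]; rewrite ?scaler0 // mulr0 addr0.
by exists f; rewrite fu scale1r.
Qed.

End LinearFunctionals.

Section TensorPairings.
Variables (k : fieldType) (A : lmodType k).
Implicit Types (f g h : A -> k) (s : t2 A) (u : t3 A).

Definition pair2 f g s := \sum_(p <- s) f p.1 * g p.2.

Definition pair3 f g h u := \sum_(p <- u) f p.1.1 * g p.1.2 * h p.2.

Lemma pair2_eq2 f g s s' : eq2 s s' -> lfun f -> lfun g -> pair2 f g s = pair2 f g s'.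
Proof. exact. Qed.

Lemma pair3_eq3 f g h u u' : eq3 u u' -> lfun f -> lfun g -> lfun h ->
  pair3 f g h u = pair3 f g h u'.
Proof. exact. Qed.

Lemma eq_pair2 f f' g g' s : f =1 f' -> g =1 g' -> pair2 f g s = pair2 f' g' s.
Proof. by move=> ef eg; apply: eq_bigr => p _; rewrite ef eg. Qed.

Lemma pair2E f g s : pair2 f g s = \sum_(p <- s) g p.2 * f p.1.
Proof. by apply: eq_bigr => p _; rewrite mulrC. Qed.

Lemma pair3E f g h u : pair3 f g h u = \sum_(p <- u) (g p.1.2 * h p.2) * f p.1.1.
Proof. by apply: eq_bigr => p _; rewrite -mulrA mulrC. Qed.

Lemma pair2_swap f g s : pair2 f g s = pair2 g f [seq (p.2, p.1) | p <- s].
Proof. by rewrite /pair2 big_map; apply: eq_bigr => p _; rewrite mulrC. Qed.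

Lemma pair3_rot f g h u : pair3 f g h u = pair3 g h f [seq (p.1.2, p.2, p.1.1) | p <- u].
Proof. by rewrite /pair3 big_map; apply: eq_bigr => p _; rewrite /= -mulrA mulrC. Qed.

Lemma pair2_seq1 f g p : pair2 f g [:: p] = f p.1 * g p.2.
Proof. exact: big_seq1. Qed.

Lemma pair2_cat f g s s' : pair2 f g (s ++ s') = pair2 f g s + pair2 f g s'.
Proof. exact: big_cat. Qed.

Lemma pair2_scale f g c s : lfun f -> pair2 f g (scale2 c s) = c * pair2 f g s.
Proof.
move=> lf; rewrite /pair2 big_map mulr_sumr.
by apply: eq_bigr => p _; rewrite lfunZ // mulrA.
Qed.

Lemma pair2_flatten f g (T : Type) (l : seq T) (F : T -> t2 A) :
  pair2 f g (flatten (map F l)) = \sum_(x <- l) pair2 f g (F x).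
Proof. by rewrite /pair2 big_flatten /= big_map. Qed.

Lemma pair2_ext2 f g (L : A * A -> t2 A) s :
  pair2 f g (ext2 L s) = \sum_(p <- s) pair2 f g (L p).
Proof. exact: pair2_flatten. Qed.

Lemma pair3_ext3 f g h (L : A * A * A -> t3 A) u :
  pair3 f g h (ext3 L u) = \sum_(p <- u) pair3 f g h (L p).
Proof. by rewrite /pair3 big_flatten /= big_map. Qed.

Lemma pair3_ext3_comp f g h (L L' : A * A * A -> t3 A) u :
  pair3 f g h (ext3 L (ext3 L' u)) = \sum_(p <- u) pair3 f g h (ext3 L (L' p)).
Proof.
rewrite pair3_ext3 /ext3 big_flatten /= big_map.
by apply: eq_bigr => p _; rewrite -pair3_ext3.
Qed.

Lemma pair3_map_l f g h c s :
  pair3 f g h [seq (c, p.1, p.2) | p <- s] = f c * pair2 g h s.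
Proof. by rewrite /pair3 big_map mulr_sumr; apply: eq_bigr => p _; rewrite mulrA. Qed.

Lemma pair3_map_r f g h c s :
  pair3 f g h [seq (p.1, p.2, c) | p <- s] = pair2 f g s * h c.
Proof. by rewrite /pair3 big_map mulr_suml. Qed.

Lemma pair3_flatten_l f g h (T : Type) (l : seq T) (e : T -> A) (L : T -> t2 A) :
  pair3 f g h (flatten [seq [seq (e p, q.1, q.2) | q <- L p] | p <- l]) =
  \sum_(p <- l) f (e p) * pair2 g h (L p).
Proof.
rewrite /pair3 big_flatten /= big_map; apply: eq_bigr => p _.
by rewrite big_map mulr_sumr; apply: eq_bigr => q _; rewrite mulrA.
Qed.

Lemma pair3_flatten_r f g h (T : Type) (l : seq T) (e : T -> A) (L : T -> t2 A) :
  pair3 f g h (flatten [seq [seq (p.1, p.2, e q) | p <- L q] | q <- l]) =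
  \sum_(q <- l) pair2 f g (L q) * h (e q).
Proof.
rewrite /pair3 big_flatten /= big_map.
by apply: eq_bigr => q _; rewrite big_map mulr_suml.
Qed.

Lemma lfun_epsid (e : A -> k) f s :
  lfun f -> f (epsid e s) = pair2 e f s.
Proof. by move=> lf; rewrite /epsid lfun_sum. Qed.

Lemma lfun_ideps (e : A -> k) f s :
  lfun f -> f (ideps e s) = pair2 f e s.
Proof. by move=> lf; rewrite /ideps lfun_sum // pair2E. Qed.

Definition bilinear_form (phi : A -> A -> k) :=
  (forall y, lfun (phi^~ y)) /\ (forall x, lfun (phi x)).

Definition trilinear_form (phi : A -> A -> A -> k) :=
  [/\ forall y z, lfun (fun x => phi x y z), forall x z, lfun (fun y => phi x y z)
    & forall x y, lfun (phi x y)].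

(* Induction on the length of [d]: writing [y_1 = g y_1 *: y_1] for a
   functional [g], each [y_i] splits as [g y_i *: y_1 + (y_i - g y_i *: y_1)];
   the first parts contribute a contraction, the second ones vanish at [i = 1]. *)
Lemma sum_eq0_of_contractions (X : Type) (phi : X -> A -> k) (d : seq (X * A)) :
  (forall x, lfun (phi x)) ->
  (forall g, lfun g -> forall y, \sum_(p <- d) g p.2 * phi p.1 y = 0) ->
  \sum_(p <- d) phi p.1 p.2 = 0.
Proof.
move=> lphi; have [n] := ubnP (size d).
elim: n d => // n IH [|[x y] d] sz hd; first by rewrite big_nil.
have [g [lg gy]] := normalizing_lfun y.
have phi_split x' y' : phi x' y' = g y' * phi x' y + phi x' (y' - g y' *: y).
  by rewrite lfunB // lfunZ // addrC subrK.
have hgy h : lfun h -> g y * h y = h y by move=> lh; rewrite -lfunZ // gy.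
have hd_cons h : lfun h -> forall z,
    h y * phi x z + \sum_(p <- d) h p.2 * phi p.1 z = 0.
  by move=> lh z; have := hd h lh z; rewrite big_cons.
rewrite big_cons phi_split gy subrr lfun0 // addr0.
rewrite (eq_bigr _ (fun p _ => phi_split p.1 p.2)) big_split /= addrA hd_cons //.
rewrite add0r -(big_map (fun p => (p.1, p.2 - g p.2 *: y)) xpredT
  (fun p => phi p.1 p.2)); apply: IH => [|h lh z]; first by rewrite size_map.
rewrite big_map /=.
under eq_bigr do rewrite lfunB // lfunZ // mulrBl -mulrA mulrCA.
rewrite sumrB -mulr_sumr.
move/eqP: (hd_cons h lh z); rewrite addrC addr_eq0 => /eqP ->.
move/eqP: (hd_cons g lg z); rewrite addrC addr_eq0 => /eqP ->.
by rewrite mulrN opprK mulrCA mulrA hgy // addNr.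
Qed.

Lemma eq2_sum s s' phi : eq2 s s' -> bilinear_form phi ->
  \sum_(p <- s) phi p.1 p.2 = \sum_(p <- s') phi p.1 p.2.
Proof.
move=> e [phi1 phi2]; apply/eqP; rewrite -subr_eq0; apply/eqP.
have phiN x y : phi (- x) y = - phi x y := lfunN _ (phi1 y).
have := @sum_eq0_of_contractions _ phi (s ++ [seq (- p.1, p.2) | p <- s']) phi2.
rewrite big_cat big_map (eq_bigr _ (fun p _ => phiN p.1 p.2)) sumrN.
apply=> g lg y; rewrite big_cat big_map /=.
under [X in _ + X]eq_bigr do rewrite phiN mulrN.
apply/eqP; rewrite sumrN subr_eq0; apply/eqP.
under eq_bigr do rewrite mulrC; under [in RHS]eq_bigr do rewrite mulrC.
exact: (e (phi^~ y) g (phi1 y) lg).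
Qed.

Lemma eq3_sum u u' phi : eq3 u u' -> trilinear_form phi ->
  \sum_(p <- u) phi p.1.1 p.1.2 p.2 = \sum_(p <- u') phi p.1.1 p.1.2 p.2.
Proof.
move=> e [phi1 phi2 phi3]; apply/eqP; rewrite -subr_eq0; apply/eqP.
have phiN x y z : phi (- x) y z = - phi x y z := lfunN _ (phi1 y z).
have := @sum_eq0_of_contractions _ (fun x => phi x.1 x.2)
  (u ++ [seq (- p.1.1, p.1.2, p.2) | p <- u']) (fun x => phi3 x.1 x.2).
rewrite big_cat big_map /= (eq_bigr _ (fun p _ => phiN p.1.1 p.1.2 p.2)) sumrN.
apply=> g lg z; rewrite big_cat big_map /=.
under [X in _ + X]eq_bigr do rewrite phiN mulrN.
apply/eqP; rewrite sumrN subr_eq0; apply/eqP.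
pose contract (w : t3 A) : t2 A := [seq (g p.2 *: p.1.1, p.1.2) | p <- w].
have e2 : eq2 (contract u) (contract u').
  move=> f f' lf lf'; rewrite !big_map /=.
  under eq_bigr do rewrite lfunZ // -mulrA mulrC.
  under [in RHS]eq_bigr do rewrite lfunZ // -mulrA mulrC.
  exact: e.
have phi_z : bilinear_form (fun x y => phi x y z).
  by split=> [y|x]; [exact: phi1 | exact: phi2].
have := eq2_sum e2 phi_z; rewrite !big_map /=.
under eq_bigr do rewrite (lfunZ _ _ (phi1 _ _)).
by under [in RHS]eq_bigr do rewrite (lfunZ _ _ (phi1 _ _)).
Qed.

Lemma bilinear_pair2 f g (L : A * A -> t2 A) : bilin2 L -> lfun f -> lfun g ->
  bilinear_form (fun y z => pair2 f g (L (y, z))).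
Proof.
move=> [L1 L2] lf lg; split=> [z|x] c y y' /=.
- by rewrite (pair2_eq2 (L1 c y y' z) lf lg) pair2_cat pair2_scale.
- by rewrite (pair2_eq2 (L2 c x y y') lf lg) pair2_cat pair2_scale.
Qed.

Lemma trilinear_form_mull f phi : lfun f -> bilinear_form phi ->
  trilinear_form (fun x y z => f x * phi y z).
Proof.
move=> lf [phi1 phi2]; split=> [y z|x z|x y] c v v' /=.
- by rewrite lf mulrDl mulrA.
- by rewrite (phi1 z) mulrDr mulrCA.
- by rewrite (phi2 y) mulrDr mulrCA.
Qed.

Lemma trilinear_form_mulr phi h : bilinear_form phi -> lfun h ->
  trilinear_form (fun x y z => phi x y * h z).
Proof.
move=> [phi1 phi2] lh; split=> [y z|x z|x y] c v v' /=.
- by rewrite (phi1 y) mulrDl mulrA.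
- by rewrite (phi2 x) mulrDl mulrA.
- by rewrite lh mulrDr mulrCA.
Qed.

Lemma ext2_span2 (L : A * A -> t2 A) (S : t2 A -> Prop) z : bilin2 L ->
  (forall w, S w -> eq2 (ext2 L w) w) -> span2 S z -> eq2 (ext2 L z) z.
Proof.
move=> bL LS [l [lS ez]] f g lf lg.
have [L1 _] := bilinear_pair2 bL lf lg.
have LZ c y y' : pair2 f g (L (c *: y, y')) = c * pair2 f g (L (y, y')) :=
  lfunZ c y (L1 y').
change (pair2 f g (ext2 L z) = pair2 f g z).
rewrite (pair2_eq2 ez lf lg) pair2_flatten pair2_ext2.
transitivity (\sum_(p <- z) pair2 f g (L (p.1, p.2))); first by apply: eq_bigr => -[].
rewrite (eq2_sum ez (bilinear_pair2 bL lf lg)) big_flatten /= big_map.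
apply: eq_big_seq => q /lS Sq; rewrite big_map pair2_scale //.
under eq_bigr do rewrite LZ.
rewrite -mulr_sumr -(pair2_eq2 (LS _ Sq) lf lg) pair2_ext2.
by congr (_ * _); apply: eq_bigr => -[].
Qed.

Lemma eq3_ext3 (L : A * A * A -> t3 A) u u' :
  (forall f g h, lfun f -> lfun g -> lfun h ->
     trilinear_form (fun x y z => pair3 f g h (L (x, y, z)))) ->
  eq3 u u' -> eq3 (ext3 L u) (ext3 L u').
Proof.
move=> tL e f g h lf lg lh.
change (pair3 f g h (ext3 L u) = pair3 f g h (ext3 L u')); rewrite !pair3_ext3.
have eta w : \sum_(p <- w) pair3 f g h (L p) =
    \sum_(p <- w) pair3 f g h (L (p.1.1, p.1.2, p.2)).
  by apply: eq_bigr => -[[]].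
by rewrite !eta; apply: eq3_sum e (tL _ _ _ lf lg lh).
Qed.

End TensorPairings.

Section Nondegeneracy.
Variables (k : fieldType) (A : lmodType k) (m : A -> A -> A).
Hypothesis mul_linl : forall (c : k) x x' y, m (c *: x + x') y = c *: m x y + m x' y.
Hypothesis nondeg_r : forall b, (forall a, m b a = 0) -> b = 0.
Implicit Types (f g h : A -> k) (s : t2 A) (u : t3 A).

Lemma lfun_mulr f t : lfun f -> lfun (f \o m^~ t).
Proof. by move=> lf c x y; rewrite /= mul_linl lf. Qed.

Lemma weighted_sum_eq_of_mulr (T : Type) (s s' : seq T) (x x' : T -> A) (c c' : T -> k) :
  (forall f t, lfun f ->
     \sum_(p <- s) c p * f (m (x p) t) = \sum_(p <- s') c' p * f (m (x' p) t)) ->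
  forall f, lfun f -> \sum_(p <- s) c p * f (x p) = \sum_(p <- s') c' p * f (x' p).
Proof.
move=> H; pose v := \sum_(p <- s) c p *: x p - \sum_(p <- s') c' p *: x' p.
have v0 : v = 0.
  apply: nondeg_r => t; apply: lfun_separates => f lf.
  have lft := lfun_mulr t lf.
  by rewrite -[f _]/((f \o m^~ t) v) lfunB // !lfun_sum // H // subrr.
move=> f lf; apply/eqP; rewrite -subr_eq0.
by rewrite -!(lfun_sum _ _ _ lf) -(lfunB _ _ lf) -/v v0 lfun0.
Qed.

Lemma pair2_eq_of_mulr s s' g :
  (forall f t, lfun f -> pair2 (f \o m^~ t) g s = pair2 (f \o m^~ t) g s') ->
  forall f, lfun f -> pair2 f g s = pair2 f g s'.
Proof.
move=> H f lf; rewrite !pair2E.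
apply: (weighted_sum_eq_of_mulr (x := fst) (x' := fst) (c := fun p => g p.2)
  (c' := fun p => g p.2)) lf => f' t lf'.
by have := H f' t lf'; rewrite !pair2E.
Qed.

Lemma pair3_eq_of_mulr u u' g h :
  (forall f t, lfun f -> pair3 (f \o m^~ t) g h u = pair3 (f \o m^~ t) g h u') ->
  forall f, lfun f -> pair3 f g h u = pair3 f g h u'.
Proof.
move=> H f lf; rewrite !pair3E.
apply: (weighted_sum_eq_of_mulr (x := fun p => p.1.1) (x' := fun p => p.1.1)
  (c := fun p => g p.1.2 * h p.2) (c' := fun p => g p.1.2 * h p.2)) lf => f' t lf'.
by have := H f' t lf'; rewrite !pair3E.
Qed.

Lemma eq2_of_mulr s s' :
  (forall t f g, lfun f -> lfun g ->
     pair2 (f \o m^~ t.1) (g \o m^~ t.2) s = pair2 (f \o m^~ t.1) (g \o m^~ t.2) s') ->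
  eq2 s s'.
Proof.
move=> H f g lf lg; apply: pair2_eq_of_mulr lf => f1 t1 lf1.
rewrite pair2_swap [RHS]pair2_swap; apply: pair2_eq_of_mulr lg => g1 t2 lg1.
by rewrite -!pair2_swap; apply: (H (t1, t2)).
Qed.

Lemma eq3_of_mulr u u' :
  (forall t f g h, lfun f -> lfun g -> lfun h ->
     pair3 (f \o m^~ t.1.1) (g \o m^~ t.1.2) (h \o m^~ t.2) u =
     pair3 (f \o m^~ t.1.1) (g \o m^~ t.1.2) (h \o m^~ t.2) u') ->
  eq3 u u'.
Proof.
move=> H f g h lf lg lh; apply: pair3_eq_of_mulr lf => f1 t1 lf1.
rewrite pair3_rot [RHS]pair3_rot; apply: pair3_eq_of_mulr lg => g1 t2 lg1.
rewrite pair3_rot [RHS]pair3_rot; apply: pair3_eq_of_mulr lh => h1 t3 lh1.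
by rewrite -!pair3_rot; apply: (H (t1, t2, t3)).
Qed.

End Nondegeneracy.

Section OppositeNondegeneracy.
Variables (k : fieldType) (A : lmodType k) (m : A -> A -> A).
Hypothesis mul_linr : forall (c : k) x y y', m x (c *: y + y') = c *: m x y + m x y'.
Hypothesis nondeg_l : forall b, (forall a, m a b = 0) -> b = 0.
Implicit Types (s : t2 A) (u : t3 A).

Let op_mul_linl (c : k) x x' y : m y (c *: x + x') = c *: m y x + m y x' :=
  mul_linr c y x x'.

Lemma eq2_of_mull s s' :
  (forall t (f g : A -> k), lfun f -> lfun g ->
     pair2 (f \o m t.1) (g \o m t.2) s = pair2 (f \o m t.1) (g \o m t.2) s') ->
  eq2 s s'.
Proof. exact: (eq2_of_mulr (m := fun x y => m y x) op_mul_linl nondeg_l). Qed.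

Lemma eq3_of_mull u u' :
  (forall t (f g h : A -> k), lfun f -> lfun g -> lfun h ->
     pair3 (f \o m t.1.1) (g \o m t.1.2) (h \o m t.2) u =
     pair3 (f \o m t.1.1) (g \o m t.1.2) (h \o m t.2) u') ->
  eq3 u u'.
Proof. exact: (eq3_of_mulr (m := fun x y => m y x) op_mul_linl nondeg_l). Qed.

End OppositeNondegeneracy.

Section Multipliers.
Variables (k : fieldType) (A : lmodType k) (m : A -> A -> A).
Hypothesis mulA : associative m.
Hypothesis mul_linl : forall (c : k) x x' y, m (c *: x + x') y = c *: m x y + m x' y.
Hypothesis mul_linr : forall (c : k) x y y', m x (c *: y + y') = c *: m x y + m x y'.
Hypothesis nondeg_l : forall b, (forall a, m a b = 0) -> b = 0.
Hypothesis nondeg_r : forall b, (forall a, m b a = 0) -> b = 0.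
Implicit Types (f g h : A -> k) (s : t2 A) (M : M2 A).

Lemma lfun_mull f t : lfun f -> lfun (f \o m t).
Proof. by move=> lf c x y; rewrite /= mul_linr lf. Qed.

Lemma pair2_mul2r f g s t :
  pair2 f g (mul2 m s [:: t]) = pair2 (f \o m^~ t.1) (g \o m^~ t.2) s.
Proof. by rewrite /pair2 big_allpairs_dep; apply: eq_bigr => p _; rewrite big_seq1. Qed.

Lemma pair2_mul2l f g t s :
  pair2 f g (mul2 m [:: t] s) = pair2 (f \o m t.1) (g \o m t.2) s.
Proof. by rewrite /pair2 big_allpairs_dep big_seq1. Qed.

Lemma mult2_pair2 M f g t w : is_mult2 m M -> lfun f -> lfun g ->
  pair2 (f \o m t.1) (g \o m t.2) (M.1 w) = pair2 (f \o m^~ w.1) (g \o m^~ w.2) (M.2 t).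
Proof.
case=> _ [_ HM] lf lg; rewrite -pair2_mul2l -pair2_mul2r.
by have := pair2_eq2 (HM [:: t] [:: w]) lf lg; rewrite /ext2 /= !cats0.
Qed.

Lemma mult2_mulr M f g t y z : is_mult2 m M -> lfun f -> lfun g ->
  pair2 (f \o m^~ t.1) (g \o m^~ t.2) (M.1 (y, z)) = pair2 f g (M.1 (m y t.1, m z t.2)).
Proof.
move=> HM lf lg; rewrite -pair2_mul2r; apply: (pair2_eq2 _ lf lg).
apply: (eq2_of_mull mul_linr nondeg_l) => t' F G lF lG.
have lFt := lfun_mulr mul_linl t.1 lF; have lGt := lfun_mulr mul_linl t.2 lG.
rewrite pair2_mul2r.
transitivity (pair2 ((F \o m^~ t.1) \o m t'.1) ((G \o m^~ t.2) \o m t'.2) (M.1 (y, z))).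
  by apply: eq_pair2 => v /=; rewrite mulA.
by rewrite !mult2_pair2 //; apply: eq_pair2 => v /=; rewrite mulA.
Qed.

Lemma mult2_mull M f g t y z : is_mult2 m M -> lfun f -> lfun g ->
  pair2 (f \o m t.1) (g \o m t.2) (M.2 (y, z)) = pair2 f g (M.2 (m t.1 y, m t.2 z)).
Proof.
move=> HM lf lg; rewrite -pair2_mul2l; apply: (pair2_eq2 _ lf lg).
apply: (eq2_of_mulr mul_linl nondeg_r) => w F G lF lG.
have lFt := lfun_mull t.1 lF; have lGt := lfun_mull t.2 lG.
rewrite pair2_mul2l.
transitivity (pair2 ((F \o m t.1) \o m^~ w.1) ((G \o m t.2) \o m^~ w.2) (M.2 (y, z))).
  by apply: eq_pair2 => v /=; rewrite mulA.
by rewrite -!mult2_pair2 //; apply: eq_pair2 => v /=; rewrite mulA.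
Qed.

End Multipliers.

Section WeakMultiplierBialgebra.
Variables (k : fieldType) (A : lmodType k) (W : WMBA A).
Local Notation m := (Defs.mul W).
Implicit Types (f g h : A -> k).

Let lfun_mulrW f (t : A) : lfun f -> lfun (f \o m^~ t) := lfun_mulr (mul_linl W) t.

Let lfun_mullW f (t : A) : lfun f -> lfun (f \o m t) := lfun_mull (mul_linr W) t.

Let mult2_mulrW := mult2_mulr (@Defs.mulA _ _ W) (mul_linl W) (mul_linr W) (@nondeg_l _ _ W).

Let mult2_mullW := mult2_mull (@Defs.mulA _ _ W) (mul_linl W) (mul_linr W) (@nondeg_r _ _ W).

Let bilinear_E1 f g : lfun f -> lfun g ->
  bilinear_form (fun y z => pair2 f g ((E W).1 (y, z))).
Proof. by apply: bilinear_pair2; case: (E_mult W). Qed.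

Let bilinear_E2 f g : lfun f -> lfun g ->
  bilinear_form (fun y z => pair2 f g ((E W).2 (y, z))).
Proof. by apply: bilinear_pair2; case: (E_mult W) => _ []. Qed.

Lemma pair2_T2 b w t f g : lfun f -> lfun g ->
  pair2 (f \o m^~ t.1) (g \o m^~ t.2) (T2 W b w) = pair2 (f \o m b) g ((Delta W w).1 t).
Proof.
move=> lf lg; rewrite -pair2_mul2r -(pair2_eq2 (ax_i2 W b w t).1 lf lg) /= pair2_ext2.
by apply: eq_bigr => p _; rewrite pair2_seq1.
Qed.

Lemma pair2_T1 w a t f g : lfun f -> lfun g ->
  pair2 (f \o m t.1) (g \o m t.2) (T1 W w a) = pair2 f (g \o m^~ a) ((Delta W w).2 t).
Proof.
move=> lf lg; rewrite -pair2_mul2l -(pair2_eq2 (ax_i1 W w a t).2 lf lg) /= pair2_ext2.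
by apply: eq_bigr => p _; rewrite pair2_seq1.
Qed.

Lemma lfun_pair2_T2 b f g : lfun f -> lfun g -> lfun (fun w => pair2 f g (T2 W b w)).
Proof.
move=> lf lg c w w' /=; rewrite -pair2_scale // -pair2_cat.
apply: (pair2_eq2 _ lf lg).
apply: (eq2_of_mulr (mul_linl W) (@nondeg_r _ _ W)) => t F G lF lG.
have lFt := lfun_mulrW t.1 lF; have lFb := lfun_mullW b lF.
rewrite pair2_cat pair2_scale // !pair2_T2 //.
by rewrite (pair2_eq2 (Delta_lin W c w w' t).1 lFb lG) /= pair2_cat pair2_scale.
Qed.

Lemma lfun_pair2_T1 a f g : lfun f -> lfun g -> lfun (fun w => pair2 f g (T1 W w a)).
Proof.
move=> lf lg c w w' /=; rewrite -pair2_scale // -pair2_cat.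
apply: (pair2_eq2 _ lf lg); apply: (eq2_of_mull (mul_linr W) (@nondeg_l _ _ W)) => t F G lF lG.
have lFt := lfun_mullW t.1 lF; have lGa := lfun_mulrW a lG.
rewrite pair2_cat pair2_scale // !pair2_T1 //.
by rewrite (pair2_eq2 (Delta_lin W c w w' t).2 lF lGa) /= pair2_cat pair2_scale.
Qed.

Lemma E_mulDelta x t : eq2 (ext2 (E W).1 ((Delta W x).1 t)) ((Delta W x).1 t).
Proof.
apply: (ext2_span2 (S := fun w => exists t', w = (E W).1 t')).
- by case: (E_mult W).
- by move=> _ [t' ->]; exact: (E_idem W t').1.
apply/(ax_iv1 W); exists [:: (1, (Delta W x).1 t)]; split.
  by move=> q; rewrite mem_seq1 => /eqP -> /=; exists x, t.
move=> f g lf lg /=.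
change (pair2 f g ((Delta W x).1 t) = pair2 f g (scale2 1 ((Delta W x).1 t) ++ [::])).
by rewrite cats0 pair2_scale // mul1r.
Qed.

Lemma Delta_mulE x t : eq2 (ext2 (E W).2 ((Delta W x).2 t)) ((Delta W x).2 t).
Proof.
apply: (ext2_span2 (S := fun w => exists t', w = (E W).2 t')).
- by case: (E_mult W) => _ [].
- by move=> _ [t' ->]; exact: (E_idem W t').2.
apply/(ax_iv2 W); exists [:: (1, (Delta W x).2 t)]; split.
  by move=> q; rewrite mem_seq1 => /eqP -> /=; exists x, t.
move=> f g lf lg /=.
change (pair2 f g ((Delta W x).2 t) = pair2 f g (scale2 1 ((Delta W x).2 t) ++ [::])).
by rewrite cats0 pair2_scale // mul1r.
Qed.

Let trilinear_oneoxE1 f g h : lfun f -> lfun g -> lfun h ->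
  trilinear_form (fun x y z => pair3 f g h ((oneoxE (E W)).1 (x, y, z))).
Proof.
move=> lf lg lh; rewrite /=.
under eq_fun do under eq_fun do under eq_fun do rewrite pair3_map_l.
exact: trilinear_form_mull lf (bilinear_E1 lg lh).
Qed.

Lemma oneoxE_mul_DoxId x a t :
  eq3 ((mulM3 (oneoxE (E W)) (DoxId m (Delta W) [:: (x, a)])).1 t)
      ((DoxId m (Delta W) ((E W).1 (x, a))).1 t).
Proof.
set Z := (DoxId m (Delta W) [:: (x, a)]).1 t.
have EZ : eq3 (ext3 (Eox1 (E W)).1 Z) Z.
  move=> f g h lf lg lh.
  change (pair3 f g h (ext3 (Eox1 (E W)).1 Z) = pair3 f g h Z).
  rewrite /Z /= cats0 pair3_ext3 big_map pair3_map_r.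
  under eq_bigr do rewrite pair3_map_r.
  rewrite /= -mulr_suml -(pair2_eq2 (E_mulDelta x t.1) lf lg) pair2_ext2.
  by congr (_ * _); apply: eq_bigr => -[].
move=> f g h lf lg lh.
change (pair3 f g h (ext3 (oneoxE (E W)).1 Z) =
        pair3 f g h ((DoxId m (Delta W) ((E W).1 (x, a))).1 t)).
rewrite -(pair3_eq3 (eq3_ext3 trilinear_oneoxE1 EZ) lf lg lh) pair3_ext3_comp.
transitivity (\sum_(p <- Z) pair3 f g h (ext3 (Eox1 (E W)).1 ((oneoxE (E W)).1 p))).
  by apply: eq_bigr => p _; rewrite (pair3_eq3 (ax_v_comm W p).1 lf lg lh).
have [_ [_ [Did _]]] := ax_v_Did W.
rewrite -pair3_ext3 -[LHS]/(pair3 f g h ((mulM3 (mulM3 (Eox1 (E W)) (oneoxE (E W)))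
  (DoxId m (Delta W) [:: (x, a)])).1 t)).
by rewrite (pair3_eq3 (Did [:: (x, a)] t).1 lf lg lh) /ext2 /= cats0.
Qed.

Let trilinear_Eox1_2 f g h : lfun f -> lfun g -> lfun h ->
  trilinear_form (fun x y z => pair3 f g h ((Eox1 (E W)).2 (x, y, z))).
Proof.
move=> lf lg lh; rewrite /=.
under eq_fun do under eq_fun do under eq_fun do rewrite pair3_map_r.
exact: trilinear_form_mulr (bilinear_E2 lf lg) lh.
Qed.

Lemma idoxD_mul_Eox1 b x t :
  eq3 ((idoxD m (Delta W) ((E W).2 (b, x))).2 t)
      ((mulM3 (idoxD m (Delta W) [:: (b, x)]) (Eox1 (E W))).2 t).
Proof.
set Z := (idoxD m (Delta W) [:: (b, x)]).2 t.
have EZ : eq3 (ext3 (oneoxE (E W)).2 Z) Z.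
  move=> f g h lf lg lh.
  change (pair3 f g h (ext3 (oneoxE (E W)).2 Z) = pair3 f g h Z).
  rewrite /Z /= cats0 pair3_ext3 big_map pair3_map_l.
  under eq_bigr do rewrite pair3_map_l.
  rewrite /= -mulr_sumr -(pair2_eq2 (Delta_mulE x (t.1.2, t.2)) lg lh) pair2_ext2.
  by congr (_ * _); apply: eq_bigr => -[].
move=> f g h lf lg lh.
have [_ [_ [_ idD]]] := ax_v_idD W.
transitivity (pair3 f g h ((idoxD m (Delta W) (ext2 (E W).2 [:: (b, x)])).2 t)).
  by rewrite /ext2 /= cats0.
rewrite -(pair3_eq3 (idD [:: (b, x)] t).2 lf lg lh).
rewrite -[LHS]/(pair3 f g h (ext3 (mulM3 (Eox1 (E W)) (oneoxE (E W))).2 Z)) pair3_ext3.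
transitivity (\sum_(p <- Z) pair3 f g h (ext3 (Eox1 (E W)).2 ((oneoxE (E W)).2 p))).
  by apply: eq_bigr => p _; rewrite (pair3_eq3 (ax_v_comm W p).2 lf lg lh).
by rewrite -pair3_ext3_comp (pair3_eq3 (eq3_ext3 trilinear_Eox1_2 EZ) lf lg lh).
Qed.

Lemma T2_E_interchange b x a :
  eq3 (flatten [seq [seq (p.1, q.1, q.2) | q <- (E W).1 (p.2, a)] | p <- T2 W b x])
      (flatten [seq [seq (p.1, p.2, q.2) | p <- T2 W b q.1] | q <- (E W).1 (x, a)]).
Proof.
apply: (eq3_of_mulr (mul_linl W) (@nondeg_r _ _ W)) => t F G H lF lG lH.
rewrite pair3_flatten_l pair3_flatten_r.
pose psi y := pair2 G H ((E W).1 (y, m a t.2)).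
have lpsi : lfun psi := (bilinear_E1 lG lH).1 _.
transitivity (pair2 (F \o m^~ t.1.1) (psi \o m^~ t.1.2) (T2 W b x)).
  by apply: eq_bigr => p _; rewrite (mult2_mulrW (t.1.2, t.2) p.2 a (E_mult W) lG lH).
rewrite pair2_T2 //.
transitivity (pair3 (F \o m b) G H
  ((mulM3 (oneoxE (E W)) (DoxId m (Delta W) [:: (x, a)])).1 t)).
  by rewrite /= cats0 pair3_ext3 big_map; apply: eq_bigr => p _; rewrite pair3_map_l.
rewrite (pair3_eq3 (oneoxE_mul_DoxId x a t) (lfun_mullW b lF) lG lH) /= pair3_flatten_r.
by apply: eq_bigr => q _; rewrite pair2_T2.
Qed.

Lemma E_T1_interchange b x a :
  eq3 (flatten [seq [seq (p.1, q.1, q.2) | q <- T1 W p.2 a] | p <- (E W).2 (b, x)])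
      (flatten [seq [seq (p.1, p.2, q.2) | p <- (E W).2 (b, q.1)] | q <- T1 W x a]).
Proof.
apply: (eq3_of_mull (mul_linr W) (@nondeg_l _ _ W)) => t F G H lF lG lH.
rewrite pair3_flatten_l pair3_flatten_r.
have lHa := lfun_mulrW a lH.
transitivity (pair3 F G (H \o m^~ a) ((idoxD m (Delta W) ((E W).2 (b, x))).2 t)).
  rewrite /= pair3_flatten_l; apply: eq_bigr => p _.
  by rewrite (pair2_T1 p.2 a (t.1.2, t.2) lG lH).
rewrite (pair3_eq3 (idoxD_mul_Eox1 b x t) lF lG lHa) /= cats0 pair3_ext3 big_map.
pose chi y := pair2 F G ((E W).2 (m t.1.1 b, y)).
have lchi : lfun chi := (bilinear_E2 lF lG).2 _.
transitivity (pair2 chi (H \o m^~ a) ((Delta W x).2 (t.1.2, t.2))).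
  by apply: eq_bigr => p _; rewrite pair3_map_r.
rewrite -pair2_T1 //; apply: eq_bigr => q _ /=.
by rewrite (mult2_mullW (t.1.1, t.1.2) b q.1 (E_mult W) lF lG).
Qed.

End WeakMultiplierBialgebra.

Theorem lemma3p5 (k : fieldType) (A : lmodType k) (W : WMBA A) (a b : A) :
  mulM1 (PiR W a) (PiL W b) = mulM1 (PiL W b) (PiR W a).
Proof.
have leps := eps_lin W.
rewrite /mulM1 /PiR /PiL /=; congr (_, _); apply: funext => x; apply: eq_of_lfun => g lg.
- pose psi y := pair2 g (eps W) ((E W).1 (y, a)).
  have lpsi : lfun psi := (bilinear_pair2 (proj1 (E_mult W)) lg leps).1 _.
  pose chi y := pair2 (eps W) g (T2 W b y).
  have lchi : lfun chi := lfun_pair2_T2 W b leps lg.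
  rewrite (lfun_ideps _ _ lg) (lfun_epsid _ _ lg) -[LHS]/(psi _) -[RHS]/(chi _).
  rewrite (lfun_epsid _ _ lpsi) (lfun_ideps _ _ lchi).
  have := pair3_eq3 (T2_E_interchange W b x a) leps lg leps.
  by rewrite pair3_flatten_l pair3_flatten_r; apply.
- pose psi y := pair2 g (eps W) (T1 W y a).
  have lpsi : lfun psi := lfun_pair2_T1 W a lg leps.
  pose chi y := pair2 (eps W) g ((E W).2 (b, y)).
  have lchi : lfun chi := (bilinear_pair2 (proj1 (proj2 (E_mult W))) leps lg).2 _.
  rewrite (lfun_epsid _ _ lg) (lfun_ideps _ _ lg) -[LHS]/(chi _) -[RHS]/(psi _).
  rewrite (lfun_ideps _ _ lchi) (lfun_epsid _ _ lpsi).
  have := pair3_eq3 (E_T1_interchange W b x a) leps lg leps.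
  by rewrite pair3_flatten_l pair3_flatten_r => /esym; apply.
Qed.
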